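(* Let $\mathcal K$ be an abstract Krivine structure, $\mathsf E=\mathsf S(\mathsf K(\mathsf S\mathsf K\mathsf K))$, and for $P\subseteq\Pi$ put $\eta P=\{\mathsf E\mathsf E\}^\perp\ast_\bullet{}^\perp P$. Then for all $P\subseteq\Pi$ and $L\subseteq\Lambda$: $$P\ast_\bullet L\subseteq P\ast L\subseteq P\ast_\perp L\subseteq P\,\clubsuit\,L\subseteq \eta P\ast_\bullet L\subseteq\eta P\ast L\subseteq\eta P\ast_\perp L.$$
   Context: An abstract Krivine structure $\mathcal K$ consists of sets $\Lambda$ (terms), $\Pi$ (stacks), a relation $\perp\subseteq\Lambda\times\Pi$ (write $t\perp\pi$), a map $\mathrm{push}:\Lambda\times\Pi\to\Pi$ written $t\cdot\pi$ (associating to the right), a map $\mathrm{app}:\Lambda\times\Lambda\to\Lambda$ written $ts$ (associating to the left), a subset $\mathrm{QP}\subseteq\Lambda$ closed under application, and $\mathsf K,\mathsf S\in\mathrm{QP}$ such that for all $t,s,u\in\Lambda$, $\pi\in\Pi$: (a) $t\perp s\cdot\pi$ implies $ts\perp\pi$; (b) $t\perp\pi$ implies $\mathsf K\perp t\cdot s\cdot\pi$; (c) $tu(su)\perp\pi$ implies $\mathsf S\perp t\cdot s\cdot u\cdot\pi$. Polars: $L^\perp=\{\pi:\forall t\in L,\ t\perp\pi\}$, ${}^\perp P=\{t:\forall\pi\in P,\ t\perp\pi\}$; $\overline P=({}^\perp P)^\perp$. Define $P\ast L=\{\pi: t\cdot\pi\in P\ \forall t\in L\}$, $P\ast_\perp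 L=\overline{P\ast L}$, $P\ast_\bullet L=\{\pi: t\cdot\pi'\in P\ \forall t\in L,\ \pi'\in\overline{\{\pi\}}\}$, $P\,\clubsuit\,L=(\{t\ell:t\in{}^\perp P,\ \ell\in L\})^\perp$. *)

Set Implicit Arguments.

Record AKS := {
  Lam : Type;
  Pi : Type;
  perp : Lam -> Pi -> Prop;
  push : Lam -> Pi -> Pi;
  app : Lam -> Lam -> Lam;
  QP : Lam -> Prop;
  QP_app : forall t s, QP t -> QP s -> QP (app t s);
  Kc : Lam;
  Sc : Lam;
  K_QP : QP Kc;
  S_QP : QP Sc;
  ax_push : forall t s pi, perp t (push s pi) -> perp (app t s) pi;
  ax_K : forall t s pi, perp t pi -> perp Kc (push t (push s pi));
  ax_S : forall t s u pi, perp (app (app t u) (app s u)) pi ->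
           perp Sc (push t (push s (push u pi)))
}.

Section Defs.
Context {K : AKS}.

Definition subset {T} (A B : T -> Prop) := forall x, A x -> B x.

Definition polL (L : Lam K -> Prop) : Pi K -> Prop :=
  fun pi => forall t, L t -> perp K t pi.
Definition polP (P : Pi K -> Prop) : Lam K -> Prop :=
  fun t => forall pi, P pi -> perp K t pi.
Definition bicl (P : Pi K -> Prop) : Pi K -> Prop := polL (polP P).

Definition star (P : Pi K -> Prop) (L : Lam K -> Prop) : Pi K -> Prop :=
  fun pi => forall t, L t -> P (push K t pi).
Definition star_perp P L := bicl (star P L).
Definition star_bullet (P : Pi K -> Prop) (L : Lam K -> Prop) : Pi K -> Prop :=
  fun pi => forall t pi', L t -> bicl (fun x => x = pi) pi' -> P (push K t pi').
Definition club (P : Pi K -> Prop) (L : Lam K -> Prop) : Pi K -> Prop :=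
  polL (fun u => exists t l, polP P t /\ L l /\ u = app K t l).

Definition Ec : Lam K :=
  app K (Sc K) (app K (Kc K) (app K (app K (Sc K) (Kc K)) (Kc K))).
Definition eta (P : Pi K -> Prop) : Pi K -> Prop :=
  star_bullet (polL (fun t => t = app K Ec Ec)) (polP P).
End Defs.


(* The first two inclusions hold for any P (a stack is in the bi-orthogonal
   of its singleton, and a set is in its bi-orthogonal), and P ∗⊥ L lies in
   P ♣ L because [t ∈ ^⊥P] and [l ∈ L] give [t l ⊥ π] for all [π ∈ P ∗ L],
   so [t l ∈ ^⊥(P ∗ L)] and taking polars reverses the inclusion.
   For the step into η P the combinator [E = S (K (S K K))] acts as an
   η-expansion: [E u ⊥ t·π] as soon as [u t ⊥ π], and likewise [E E ⊥ u·ρ]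
   as soon as [E u ⊥ ρ]; pushing these through the bi-orthogonals of
   singletons shows that [t·π'] lies in η P whenever [π ∈ P ♣ L]. *)

Section Orthogonality.
Context {K : AKS}.

Lemma subset_bicl (P : Pi K -> Prop) : subset P (bicl P).
Proof. intros pi HP t Ht. exact (Ht pi HP). Qed.

Lemma polL_antitone (L L' : Lam K -> Prop) : subset L L' -> subset (polL L') (polL L).
Proof. intros HLL' pi Hpi t Ht. exact (Hpi t (HLL' t Ht)). Qed.

Lemma perp_bicl1 (t : Lam K) (pi pi' : Pi K) :
  perp K t pi -> bicl (fun x => x = pi) pi' -> perp K t pi'.
Proof. intros Ht Hpi'. apply Hpi'. intros x ->. exact Ht. Qed.

Lemma star_bullet_sub_star (P : Pi K -> Prop) (L : Lam K -> Prop) :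
  subset (star_bullet P L) (star P L).
Proof.
  intros pi H t Ht. apply H; [exact Ht |]. apply subset_bicl. reflexivity.
Qed.

Lemma star_sub_star_perp (P : Pi K -> Prop) (L : Lam K -> Prop) :
  subset (star P L) (star_perp P L).
Proof. apply subset_bicl. Qed.

Lemma app_polP_star (P : Pi K -> Prop) (L : Lam K -> Prop) (t l : Lam K) :
  polP P t -> L l -> polP (star P L) (app K t l).
Proof. intros Ht Hl pi Hpi. apply ax_push. exact (Ht _ (Hpi l Hl)). Qed.

Lemma star_perp_sub_club (P : Pi K -> Prop) (L : Lam K -> Prop) :
  subset (star_perp P L) (club P L).
Proof.
  apply polL_antitone. intros u (t & l & Ht & Hl & ->).
  exact (app_polP_star P L t l Ht Hl).
Qed.

End Orthogonality.

Section Eta_expansion.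
Context {K : AKS}.

Definition Ic : Lam K := app K (app K (Sc K) (Kc K)) (Kc K).

Lemma Ec_SKI : Ec = app K (Sc K) (app K (Kc K) Ic).
Proof. reflexivity. Qed.

Lemma perp_K_push (t s : Lam K) (pi : Pi K) :
  perp K t pi -> perp K (app K (Kc K) t) (push K s pi).
Proof. intro H. apply ax_push, ax_K, H. Qed.

Lemma perp_I_push (x : Lam K) (pi : Pi K) :
  perp K x pi -> perp K Ic (push K x pi).
Proof. intro H. apply ax_push, ax_push, ax_S, ax_push, perp_K_push, H. Qed.

Lemma perp_E_push (u t : Lam K) (pi : Pi K) :
  perp K (app K u t) pi -> perp K Ec (push K u (push K t pi)).
Proof.
  intro H. rewrite Ec_SKI. apply ax_push, ax_S, ax_push, ax_push, perp_K_push, perp_I_push, H.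
Qed.

Lemma club_sub_eta_star_bullet (P : Pi K -> Prop) (L : Lam K -> Prop) :
  subset (club P L) (star_bullet (eta P) L).
Proof.
  intros pi Hpi t pi' Ht Hpi' u rho Hu Hrho EE ->.
  apply ax_push, perp_E_push.
  eapply perp_bicl1; [| exact Hrho]. apply ax_push, perp_E_push.
  eapply perp_bicl1; [| exact Hpi']. apply Hpi.
  exists u, t. auto.
Qed.

End Eta_expansion.

Theorem mainTheorem6 (K : AKS) (P : Pi K -> Prop) (L : Lam K -> Prop) :
  subset (star_bullet P L) (star P L) /\
  subset (star P L) (star_perp P L) /\
  subset (star_perp P L) (club P L) /\
  subset (club P L) (star_bullet (eta P) L) /\
  subset (star_bullet (eta P) L) (star (eta P) L) /\
  subset (star (eta P) L) (star_perp (eta P) L).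
Proof.
  repeat split.
  - apply star_bullet_sub_star.
  - apply star_sub_star_perp.
  - apply star_perp_sub_club.
  - apply club_sub_eta_star_bullet.
  - apply star_bullet_sub_star.
  - apply star_sub_star_perp.
Qed.
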